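(* Let $H_m,H_{el}$ be finite groups with an action $(h,g)\mapsto h\cdot g$ of $H_{el}$ on $H_m$ satisfying $h\cdot(gg')=(h\cdot g)(h\cdot g')$, and let $\mathcal{A}=F(H_m)\times\mathbb{C}H_{el}$ be the modified quantum double, with elements written as functions in $F(H_m\times H_{el})$. Let $\alpha$ be an irreducible representation of $H_{el}$ on $V_\alpha$, let $\Pi^e_\alpha$ be the corresponding electric irreducible representation of $\mathcal{A}$ (orbit $\{e\}$, $g_A=e$, $N_A=H_{el}$), and let $|\phi_r\rangle$ be a vector in its carrier space. Let $N_{\phi_r}=\{h\in H_{el}:\Pi^e_\alpha(h)|\phi_r\rangle=|\phi_r\rangle\}$, where $h$ denotes $\sum_{g\in H_m}P_gh\in\mathcal{A}$. Then $\mathcal{T}_r:=\{a\in\mathcal{A}:(\mathrm{id}\otimes\Pi^e_\alpha)\Delta(a)(1\otimes|\phi_r\rangle)=a\otimes|\phi_r\rangle\}$ equals $F(H_m)\otimes\mathbb{C}N_{\phi_r}$, i.e. $f\in\mathcal{T}_r$ if and only if $f(x_1,y_1)=0$ for all $x_1\in H_m$ and all $y_1\notin N_{\phi_r}$.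
   Context: Modified quantum double: vector space $F(H_m)\otimes\mathbb{C}H_{el}$ with basis $P_gh$, identified with $F(H_m\times H_{el})$ via $P_gh\leftrightarrow\delta_g\otimes\delta_h$; $P_ghP_{g'}h'=\delta_{g,h\cdot g'}P_ghh'$, $\Delta(P_gh)=\sum_{g'\in H_m}P_{g'}h\otimes P_{g'^{-1}g}h$, $\varepsilon(P_gh)=\delta_{g,e}$, $S(P_gh)=P_{h^{-1}\cdot g^{-1}}h^{-1}$. The carrier space of $\Pi^e_\alpha$ is $\{|\phi\rangle:H_{el}\to V_\alpha\mid |\phi(xn)\rangle=\alpha(n^{-1})|\phi(x)\rangle\ \forall n\in H_{el}\}$, with action $(\Pi^e_\alpha(f)\phi)(x)=\sum_{z\in H_{el}}f(e,z)|\phi(z^{-1}x)\rangle$. *)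

From HB Require Import structures.
From mathcomp Require Import all_boot all_order all_algebra all_fingroup.
From mathcomp Require Import all_field all_character.
Set Implicit Arguments. Unset Strict Implicit. Unset Printing Implicit Defensive.
Import GRing.Theory Num.Theory.
Local Open Scope ring_scope.

(* Modified quantum double A = F(Hm) (x) C Hel, identified with
   F(Hm x Hel): an element f is its coordinate function, f = sum f(g,h) P_g h. *)
Notation QD Hm Hel := {ffun (Hm : finGroupType) * (Hel : finGroupType) -> algC}.
(* A (x) A identified with F((Hm x Hel) x (Hm x Hel)) (coordinates in the
   basis P_g h (x) P_g' h'). *)
Notation QD2 Hm Hel :=
  {ffun ((Hm : finGroupType) * (Hel : finGroupType)) * (Hm * Hel) -> algC}.

Section QuantumDouble.
Variables (Hm Hel : finGroupType).

Definition Pb (g : Hm) (h : Hel) : QD Hm Hel :=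
  [ffun b => ((b == (g, h)) : nat)%:R].

Definition elem (h : Hel) : QD Hm Hel := \sum_(g : Hm) Pb g h.

Definition tens (a b : QD Hm Hel) : QD2 Hm Hel :=
  [ffun p => a p.1 * b p.2].

Definition Delta_basis (g : Hm) (h : Hel) : QD2 Hm Hel :=
  \sum_(g' : Hm) tens (Pb g' h) (Pb (g'^-1 * g)%g h).

Definition Delta (f : QD Hm Hel) : QD2 Hm Hel :=
  [ffun p => \sum_(b : Hm * Hel) f b * Delta_basis b.1 b.2 p].

Variable n : nat.
Variable rG : mx_representation algC [set: Hel] n.

(* the representation alpha of Hel on V_alpha = 'rV_n, as a left action:
   alpha(g) v := v *m rG (g^-1)  (rG is mathcomp's right-action convention) *)
Definition alpha (g : Hel) (v : 'rV[algC]_n) : 'rV[algC]_n := v *m rG (g^-1)%g.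

Definition in_carrier (phi : {ffun Hel -> 'rV[algC]_n}) : Prop :=
  forall x m : Hel, phi (x * m)%g = alpha (m^-1)%g (phi x).

Definition PiE (f : QD Hm Hel) (phi : {ffun Hel -> 'rV[algC]_n})
  : {ffun Hel -> 'rV[algC]_n} :=
  [ffun x => \sum_(z : Hel) f (1%g, z) *: phi (z^-1 * x)%g].

(* A (x) Carrier identified with coordinate functions Hm x Hel -> Carrier.
   (id (x) Pi)(T)(1 (x) phi) for T in A (x) A: *)
Definition idPi (T : QD2 Hm Hel) (phi : {ffun Hel -> 'rV[algC]_n})
  : {ffun Hm * Hel -> {ffun Hel -> 'rV[algC]_n}} :=
  [ffun b => PiE [ffun b' => T (b, b')] phi].

Definition tensV (a : QD Hm Hel) (phi : {ffun Hel -> 'rV[algC]_n})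
  : {ffun Hm * Hel -> {ffun Hel -> 'rV[algC]_n}} :=
  [ffun b => [ffun x => a b *: phi x]].

Definition Nphi (phi : {ffun Hel -> 'rV[algC]_n}) : {set Hel} :=
  [set h | PiE (elem h) phi == phi].

Definition in_Tr (phi : {ffun Hel -> 'rV[algC]_n}) (a : QD Hm Hel) : Prop :=
  idPi (Delta a) phi = tensV a phi.

End QuantumDouble.

From mathcomp Require Import all_boot all_algebra all_fingroup.
From mathcomp Require Import all_field all_character.
Set Implicit Arguments. Unset Strict Implicit. Unset Printing Implicit Defensive.
Import GRing.Theory.
Local Open Scope ring_scope.

(* The coproduct gives Delta(f) = sum f(g g', h) P_g h (x) P_g' h, and the
   electric representation only sees the part with g' = e, on which it acts
   through the H_el-component; hence
   (id (x) Pi)(Delta f)(1 (x) phi) = sum f(g, h) P_g h (x) Pi(h) phi.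
   Comparing coefficients with f (x) phi, f lies in T_r exactly when
   f(g, h) (Pi(h) phi - phi) = 0 for all (g, h), i.e. when f vanishes off
   H_m x N_phi. *)

Section ElectricStabiliser.
Variables (Hm Hel : finGroupType) (n : nat).

Lemma Delta_basisE (g : Hm) (h : Hel) (p : (Hm * Hel) * (Hm * Hel)) :
  Delta_basis g h p =
    [&& p.1.2 == h, p.2.2 == h & g == p.1.1 * p.2.1]%g%:R.
Proof.
case: p => [[g1 h1] [g2 h2]] /=.
have eq_g2 : (g2 == g1^-1 * g)%g = (g == g1 * g2)%g.
  by rewrite -(inj_eq (mulgI g1)) mulKVg eq_sym.
rewrite /Delta_basis sum_ffunE (bigD1 g1) //= big1 ?addr0 => [|g' ne_g'].
  rewrite /tens !ffunE /= !xpair_eqE eqxx /= -natrM mulnb eq_g2.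
  by rewrite (andbC (g == _)).
by rewrite /tens !ffunE /= xpair_eqE eq_sym (negbTE ne_g') mul0r.
Qed.

Lemma DeltaE (f : QD Hm Hel) (g1 g2 : Hm) (h1 h2 : Hel) :
  Delta f ((g1, h1), (g2, h2)) = (h2 == h1)%:R * f (g1 * g2, h1)%g.
Proof.
rewrite ffunE (bigD1 (g1 * g2, h1)%g) //= big1 ?addr0 => [|[g h] /= ne_gh].
  by rewrite Delta_basisE /= !eqxx andbT mulrC.
rewrite Delta_basisE /=.
suff -> : [&& h1 == h, h2 == h & g == g1 * g2]%g = false by rewrite mulr0.
apply/and3P => -[/eqP def_h _ /eqP def_g].
by move: ne_gh; rewrite def_g def_h eqxx.
Qed.

Lemma elemE (h : Hel) (g : Hm) (z : Hel) : elem Hm h (g, z) = (z == h)%:R.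
Proof.
rewrite /elem sum_ffunE (bigD1 g) //= big1 ?addr0 => [|g' ne_g'].
  by rewrite ffunE xpair_eqE eqxx.
by rewrite ffunE xpair_eqE eq_sym (negbTE ne_g').
Qed.

Variable phi : {ffun Hel -> 'rV[algC]_n}.

Lemma PiE_elem (h : Hel) : PiE (elem Hm h) phi = [ffun x => phi (h^-1 * x)%g].
Proof.
apply/ffunP => x; rewrite !ffunE (bigD1 h) //= big1 ?addr0 => [|z ne_z].
  by rewrite elemE eqxx scale1r.
by rewrite elemE (negbTE ne_z) scale0r.
Qed.

Lemma idPi_Delta (f : QD Hm Hel) :
  idPi (Delta f) phi = [ffun b => f b *: PiE (elem Hm b.2) phi].
Proof.
apply/ffunP => -[g h]; apply/ffunP => x.
rewrite 2![in RHS]ffunE PiE_elem [in RHS]ffunE !ffunE.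
rewrite (bigD1 h) //= big1 ?addr0 => [|z ne_z].
  by rewrite ffunE DeltaE eqxx mul1r mulg1.
by rewrite ffunE DeltaE (negbTE ne_z) mul0r scale0r.
Qed.

Lemma tensVE (a : QD Hm Hel) : tensV a phi = [ffun b => a b *: phi].
Proof. by apply/ffunP => b; apply/ffunP => x; rewrite !ffunE. Qed.

Lemma in_TrE (f : QD Hm Hel) :
  in_Tr phi f <-> forall b, f b *: PiE (elem Hm b.2) phi = f b *: phi.
Proof.
rewrite /in_Tr idPi_Delta tensVE; split=> [eq_f b | eq_f].
  by move/ffunP/(_ b): eq_f; rewrite !ffunE.
by apply/ffunP => b; rewrite !ffunE eq_f.
Qed.

End ElectricStabiliser.

Theorem mainTheorem6 (Hm Hel : finGroupType) (act : Hel -> Hm -> Hm)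
  (act1 : forall g : Hm, act 1%g g = g)
  (actM : forall (h h' : Hel) (g : Hm), act (h * h')%g g = act h (act h' g))
  (act_morph : forall (h : Hel) (g g' : Hm),
      act h (g * g')%g = (act h g * act h g')%g)
  (n : nat) (rG : mx_representation algC [set: Hel] n)
  (rG_irr : mx_irreducible rG)
  (phi : {ffun Hel -> 'rV[algC]_n}) (phi_car : in_carrier rG phi)
  (f : QD Hm Hel) :
  in_Tr phi f <->
  (forall (x1 : Hm) (y1 : Hel), y1 \notin @Nphi Hm Hel n phi -> f (x1, y1) = 0).
Proof.
apply: iff_trans (in_TrE phi f) _.
split=> [eq_f x1 y1 notN | vanish [x1 y1]].
  apply/eqP; apply: contraNT notN => nz_f.
  by rewrite inE; apply/eqP/(scalerI nz_f)/(eq_f (x1, y1)).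
have [N_y1 | /vanish->] := boolP (y1 \in Nphi Hm phi); last by rewrite !scale0r.
by move: N_y1; rewrite inE => /eqP ->.
Qed.
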